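(* If $L$ is a finite ranked lattice with at least two elements, then $\mathcal{M}(L,1)=0$.
   Context: For a finite ranked poset $\mathcal{P}$ with rank function $\mathrm{rk}$, let $\mathrm{rk}(\mathcal{P})$ be the maximum rank of an element and $\rho(x,y,z)=3\,\mathrm{rk}(\mathcal{P})-\mathrm{rk}(x)-\mathrm{rk}(y)-\mathrm{rk}(z)$. Let $\delta_3(x,y,z)=1$ if $x=y=z$ and $0$ otherwise, and let $J$ be the unique integer-valued function on triples $x\le y\le z$ of $\mathcal{P}$ with $\sum_{x\le a\le y\le b\le z}J(a,y,b)=\delta_3(x,y,z)$ for all $x\le y\le z$. Then $\mathcal{M}(\mathcal{P},t)=\sum_{x\le y\le z}J(x,y,z)\,t^{\rho(x,y,z)}$. *)

From HB Require Import structures.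
From mathcomp Require Import all_boot all_order all_algebra.
Set Implicit Arguments. Unset Strict Implicit. Unset Printing Implicit Defensive.
Import Order.TTheory GRing.Theory Num.Theory.
Local Open Scope order_scope.

Definition is_rank_function (d : Order.disp_t) (T : finPOrderType d)
  (rk : T -> nat) : Prop :=
  (forall x : T, (forall y : T, ~~ (y < x)) -> rk x = 0%N) /\
  (forall x y : T, x < y -> (forall z : T, ~~ ((x < z) && (z < y))) ->
      rk y = (rk x).+1).

Definition rank_of (d : Order.disp_t) (T : finPOrderType d) (rk : T -> nat) : nat :=
  (\max_(x : T) rk x)%N.

(* rho(x,y,z) = 3 rk(P) - rk x - rk y - rk z  (always >= 0) *)
Definition rho (d : Order.disp_t) (T : finPOrderType d) (rk : T -> nat)
  (x y z : T) : nat := (3 * rank_of rk - rk x - rk y - rk z)%N.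

Definition delta3 (d : Order.disp_t) (T : finPOrderType d) (x y z : T) : int :=
  if (x == y) && (y == z) then 1%R else 0%R.

Definition is_J (d : Order.disp_t) (T : finPOrderType d) (J : T -> T -> T -> int) : Prop :=
  forall x y z : T, x <= y -> y <= z ->
    (\sum_(a : T | ((x <= a)%O && (a <= y)%O))
       \sum_(b : T | ((y <= b)%O && (b <= z)%O)) J a y b)%R = delta3 x y z.

Definition Mpoly (d : Order.disp_t) (T : finPOrderType d) (rk : T -> nat)
  (J : T -> T -> T -> int) : {poly int} :=
  (\sum_(x : T) \sum_(y : T) \sum_(z : T | ((x <= y)%O && (y <= z)%O))
     (J x y z)%:P * 'X^(rho rk x y z))%R.

From HB Require Import structures.
From mathcomp Require Import all_boot all_order all_algebra.
Import Order.TTheory GRing.Theory Num.Theory.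

(* At t = 1 the powers of t disappear, so M(L,1) is the plain sum of J over all
   chains x <= y <= z.  Grouping by the middle element y, and using that every
   x lies above the bottom 0 and every z below the top 1 of L, the inner double
   sum is the left-hand side of the defining system of J at (0, y, 1), which is
   delta3(0, y, 1) = 0 because 0 <> 1 as soon as L has two elements. *)

Local Open Scope order_scope.

Lemma foldr_meet_le (d : Order.disp_t) (L : latticeType d) (x0 : L) (s : seq L) y :
  y \in s -> foldr Order.meet x0 s <= y.
Proof.
elim: s => //= a s IHs; rewrite in_cons => /orP [/eqP -> | ys]; first exact: leIl.
exact: le_trans (leIr _ _) (IHs ys).
Qed.

Lemma foldr_join_ge (d : Order.disp_t) (L : latticeType d) (x0 : L) (s : seq L) y :
  y \in s -> y <= foldr Order.join x0 s.
Proof.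
elim: s => //= a s IHs; rewrite in_cons => /orP [/eqP -> | ys]; first exact: leUl.
exact: le_trans (IHs ys) (leUr _ _).
Qed.

Section FinLatticeBounds.

Context {d : Order.disp_t} {L : finLatticeType d} (x0 : L).

Lemma finLattice_has_bottom : exists b : L, forall y, b <= y.
Proof. by exists (foldr Order.meet x0 (enum L)) => y; rewrite foldr_meet_le ?mem_enum. Qed.

Lemma finLattice_has_top : exists t : L, forall y, y <= t.
Proof. by exists (foldr Order.join x0 (enum L)) => y; rewrite foldr_join_ge ?mem_enum. Qed.

End FinLatticeBounds.

Section FinPOrder.

Context {d : Order.disp_t} {T : finPOrderType d}.

Lemma bottom_neq_top (b t : T) :
  (forall y, b <= y) -> (forall y, y <= t) -> (1 < #|T|)%N -> b != t.
Proof.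
move=> Hb Ht /card_gt1P [u [v [_ _ /negP uv]]]; apply/negP => /eqP bt.
have Eb y : y = b by apply/le_anti; rewrite Hb bt Ht.
by apply: uv; rewrite (Eb u) (Eb v).
Qed.

Lemma delta3_outer_neq (x y z : T) : x != z -> delta3 x y z = 0%R.
Proof. by move=> xz; rewrite /delta3; case: eqP => [Exy | //]; rewrite -Exy (negbTE xz). Qed.

Lemma horner1_Mpoly (rk : T -> nat) (J : T -> T -> T -> int) :
  ((Mpoly rk J).[1] =
   \sum_(x : T) \sum_(y : T) \sum_(z : T | (x <= y)%O && (y <= z)%O) J x y z)%R.
Proof.
rewrite /Mpoly horner_sum; apply: eq_bigr => x _.
rewrite horner_sum; apply: eq_bigr => y _; rewrite horner_sum; apply: eq_bigr => z _.
by rewrite hornerM hornerC hornerXn expr1n mulr1.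
Qed.

Lemma sum_chains_by_middle {b t : T} (Hb : forall y, b <= y) (Ht : forall y, y <= t)
    (F : T -> T -> T -> int) :
  (\sum_(x : T) \sum_(y : T) \sum_(z : T | (x <= y)%O && (y <= z)%O) F x y z =
   \sum_(y : T) \sum_(a : T | (b <= a)%O && (a <= y)%O)
     \sum_(c : T | (y <= c)%O && (c <= t)%O) F a y c)%R.
Proof.
rewrite exchange_big; apply: eq_bigr => y _.
rewrite [RHS]big_mkcond; apply: eq_bigr => x _; rewrite Hb /=.
case: (x <= y); last by rewrite big_pred0.
by apply: eq_bigl => z; rewrite Ht andbT.
Qed.

End FinPOrder.

Theorem proposition6p4 (d : Order.disp_t) (L : finLatticeType d)
  (rk : L -> nat) (J : L -> L -> L -> int) :
  is_rank_function rk -> (1 < #|L|)%N -> is_J J ->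
  ((Mpoly rk J).[1] = 0)%R.
Proof.
move=> _ cardL HJ; have /card_gt0P [x0 _] := ltnW cardL.
have [b Hb] := finLattice_has_bottom x0; have [t Ht] := finLattice_has_top x0.
rewrite horner1_Mpoly (sum_chains_by_middle Hb Ht) big1 // => y _.
by rewrite HJ // delta3_outer_neq // bottom_neq_top.
Qed.
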